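(* Let $G$ be a labeled complete graph, let $0<\gamma<\alpha<1/2$, and let $x$ be a fractional clustering of $G$. Run the following algorithm: set $S=V(G)$; while $S\ne\emptyset$, for each $u\in S$ let $T_u=\{w\in S\setminus\{u\}: x_{uw}\le\alpha\}$ and $T^*_u=\{w\in S\setminus\{u\}:x_{uw}\le\gamma\}$, choose a pivot $u\in S$ maximizing $|T^*_u|$, let $T=T_u$, and if $\sum_{w\in T}x_{uw}\ge\alpha|T|/2$ output $\{u\}$ and remove $u$ from $S$, otherwise output $\{u\}\cup T$ and remove $\{u\}\cup T$ from $S$. Consider any iteration in which the cluster $\{u\}\cup T$ is output (i.e. $\sum_{w\in T}x_{uw}<\alpha|T|/2$), and let $S$ denote the set of remaining vertices at the start of that iteration. Then for every $z\in S\setminus(\{u\}\cup T)$, \[ \bigl|N^+(z)\cap(\{u\}\cup T)\bigr| \le \max\left\{\tfrac{1}{1-2\alpha},\tfrac{2}{\alpha}\right\}\left(\sum_{w\in N^+(z)\cap(\{u\}\cup T)}x_{zw}+\sum_{w\in N^-(z)\cap(\{u\}\cup T)}(1-x_{zw})\right). \]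
   Context: A fractional clustering of $G$ is a vector $x$ indexed by unordered pairs of distinct vertices with $x_{uv}\in[0,1]$ and $x_{vz}\le x_{vw}+x_{wz}$ for all distinct $v,w,z$; $x_{uu}=0$. $N^+(z)$, $N^-(z)$ are the sets of vertices joined to $z$ by a $+$ edge, resp. $-$ edge. (In the paper's terminology: the left side is the total cluster-cost and the sum on the right the total LP-cost of the edges from $z$ to the cluster $\{u\}\cup T$.) *)

From HB Require Import structures.
From mathcomp Require Import all_boot all_order all_algebra.
Set Implicit Arguments. Unset Strict Implicit. Unset Printing Implicit Defensive.
Import Order.TTheory GRing.Theory Num.Theory.
Local Open Scope ring_scope.

Section Defs.
Variables (R : realFieldType) (V : finType).

(* A labeled complete graph on V: each pair of distinct vertices is joined
   by a + edge (plus u v = true) or a - edge (plus u v = false). *)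
Definition labeled_complete (plus : rel V) : Prop := forall u v, plus u v = plus v u.

Definition Nplus (plus : rel V) (z : V) : {set V} := [set w | (w != z) && plus z w].
Definition Nminus (plus : rel V) (z : V) : {set V} := [set w | (w != z) && ~~ plus z w].

Definition fractional_clustering (x : V -> V -> R) : Prop :=
  [/\ forall u v, x u v = x v u,
      forall u, x u u = 0,
      forall u v, 0 <= x u v <= 1
    & forall v w z, v != w -> w != z -> v != z -> x v z <= x v w + x w z].

Variable x : V -> V -> R.

(* T_u (threshold a = alpha) and T*_u (threshold a = gamma) *)
Definition Tball (S : {set V}) (u : V) (a : R) : {set V} :=
  [set w in S | (w != u) && (x u w <= a)].

Definition is_pivot (gamma : R) (S : {set V}) (u : V) : Prop :=
  u \in S /\ forall v, v \in S -> (#|Tball S v gamma| <= #|Tball S u gamma|)%N.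

Definition alg_step (alpha gamma : R) (S S' : {set V}) : Prop :=
  exists u, is_pivot gamma S u /\
    let T := Tball S u alpha in
    if alpha * #|T|%:R / 2 <= \sum_(w in T) x u w
    then S' = S :\ u
    else S' = S :\: (u |: T).

Inductive alg_reachable (alpha gamma : R) : {set V} -> Prop :=
| reach_init : alg_reachable alpha gamma [set: V]
| reach_step S S' : alg_reachable alpha gamma S -> alg_step alpha gamma S S' ->
    alg_reachable alpha gamma S'.

End Defs.

(** Let C = {u} ∪ T be the output cluster and z a vertex outside it. Since
    z ∉ T and z ∈ S we have x_uz > α, while x_uw ≤ α for every w ∈ C.
    If x_uz ≥ 1 - α, the triangle inequality gives x_zw ≥ 1 - 2α for all
    w ∈ C, so each + edge from z into C costs at least 1 - 2α.
    Otherwise α < x_uz < 1 - α, and both kinds of edges zw cost at least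
    α - x_uw, so the total cost is at least α|C| - Σ_T x_uw > α|C|/2
    because the cluster was light.  In both cases the number of + edges,
    which is at most |C|, is bounded by the stated multiple of the cost.
    Neither the choice of the pivot nor the history of the algorithm
    matters. *)

From mathcomp Require Import lra.
From HB Require Import structures.
From mathcomp Require Import all_boot all_order all_algebra.
Import Order.TTheory GRing.Theory Num.Theory.
Local Open Scope ring_scope.

Lemma card_mul_le_sum (R : numDomainType) (T : finType) (A B : {set T})
    (f : T -> R) (c : R) :
  A \subset B -> {in A, forall w, c <= f w} -> {in B, forall w, 0 <= f w} ->
  c * #|A|%:R <= \sum_(w in B) f w.
Proof.
move=> AB cf f0; rewrite (big_setID A) (setIidPr AB) /=.
have -> : c * #|A|%:R = \sum_(w in A) c by rewrite sumr_const mulr_natr.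
rewrite -[X in X <= _]addr0; apply: lerD; first exact: ler_sum.
by apply: sumr_ge0 => w /setDP[wB _]; apply: f0.
Qed.

Definition lp_cost {R : realFieldType} {V : finType} (x : V -> V -> R)
    (plus : rel V) (z w : V) : R :=
  if plus z w then x z w else 1 - x z w.

Section FractionalClustering.
Context {R : realFieldType} {V : finType} {x : V -> V -> R}.
Hypothesis fc : fractional_clustering x.

Lemma fc_sym u v : x u v = x v u.
Proof. by case: fc. Qed.

Lemma fc_ge0 u v : 0 <= x u v.
Proof. by case: fc => _ _ /(_ u v) /andP[]. Qed.

Lemma fc_le1 u v : x u v <= 1.
Proof. by case: fc => _ _ /(_ u v) /andP[]. Qed.

Lemma fc_refl u : x u u = 0.
Proof. by case: fc. Qed.

Lemma fc_triangle v w z : x v z <= x v w + x w z.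
Proof.
have [->|vw] := eqVneq v w; first by rewrite fc_refl add0r.
have [->|wz] := eqVneq w z; first by rewrite fc_refl addr0.
have [->|vz] := eqVneq v z; first by rewrite fc_refl addr_ge0 ?fc_ge0.
by case: fc => _ _ _; apply.
Qed.

Lemma fc_far_ge (a : R) u z w :
  1 - a <= x u z -> x u w <= a -> 1 - 2 * a <= x z w.
Proof. by have := fc_triangle u w z; rewrite (fc_sym w z); lra. Qed.

Variable plus : rel V.

Lemma lp_cost_ge0 z w : 0 <= lp_cost x plus z w.
Proof. by rewrite /lp_cost; have := fc_ge0 z w; have := fc_le1 z w; case: plus; lra. Qed.

Lemma lp_cost_ge_gap (a : R) u z w :
  a <= x u z -> x u z <= 1 - a -> a - x u w <= lp_cost x plus z w.
Proof.
have := fc_triangle u w z; have := fc_triangle z u w.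
by rewrite /lp_cost (fc_sym w z) (fc_sym z u); case: plus; lra.
Qed.

Lemma sum_Nplus_Nminus_lp_cost (C : {set V}) z : z \notin C ->
  \sum_(w in Nplus plus z :&: C) x z w + \sum_(w in Nminus plus z :&: C) (1 - x z w)
  = \sum_(w in C) lp_cost x plus z w.
Proof.
move=> zC; rewrite [RHS](bigID (plus z)) /=.
have wz w : w \in C -> w != z by apply: contraTneq => ->.
congr (_ + _); apply: eq_big => w.
- by rewrite !inE andbC; case: (boolP (w \in C)) => // /wz ->.
- by rewrite !inE /lp_cost => /andP[/andP[_ ->]].
- by rewrite !inE andbC; case: (boolP (w \in C)) => // /wz ->.
- by rewrite !inE /lp_cost => /andP[/andP[_ /negbTE ->]].
Qed.

Lemma sum_ball_gap (S : {set V}) u (a : R) :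
  \sum_(w in u |: Tball x S u a) (a - x u w)
  = a * (#|Tball x S u a|.+1)%:R - \sum_(w in Tball x S u a) x u w.
Proof.
have uT : u \notin Tball x S u a by rewrite inE eqxx andbF.
rewrite sumrB sumr_const big_setU1 //= fc_refl add0r cardsU1 uT.
by rewrite mulr_natr.
Qed.

Lemma light_cluster_cost (S : {set V}) (u z : V) (a : R) :
  0 <= a -> a <= x u z -> x u z <= 1 - a ->
  \sum_(w in Tball x S u a) x u w < a * #|Tball x S u a|%:R / 2 ->
  a * (#|Tball x S u a|.+1)%:R <= 2 * \sum_(w in u |: Tball x S u a) lp_cost x plus z w.
Proof.
move=> a_ge0 a_le le_a light.
have gap_le : \sum_(w in u |: Tball x S u a) (a - x u w)
              <= \sum_(w in u |: Tball x S u a) lp_cost x plus z w.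
  by apply: ler_sum => w _; apply: lp_cost_ge_gap.
move: light gap_le; rewrite sum_ball_gap -[(#|Tball x S u a|.+1)%:R]natr1 mulrDr mulr1.
set s := \sum_(w in _) _; set c := \sum_(w in _) _; lra.
Qed.

End FractionalClustering.

Theorem lemma5 (R : realFieldType) (V : finType) (plus : rel V)
  (x : V -> V -> R) (alpha gamma : R) (S : {set V}) (u z : V) :
  labeled_complete plus ->
  0 < gamma -> gamma < alpha -> alpha < 1 / 2 ->
  fractional_clustering x ->
  alg_reachable x alpha gamma S ->
  is_pivot x gamma S u ->
  \sum_(w in Tball x S u alpha) x u w < alpha * #|Tball x S u alpha|%:R / 2 ->
  z \in S :\: (u |: Tball x S u alpha) ->
  #|Nplus plus z :&: (u |: Tball x S u alpha)|%:R <=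
    Num.max ((1 - 2 * alpha)^-1) (2 / alpha) *
    (\sum_(w in Nplus plus z :&: (u |: Tball x S u alpha)) x z w +
     \sum_(w in Nminus plus z :&: (u |: Tball x S u alpha)) (1 - x z w)).
Proof.
move=> _ gamma_gt0 gamma_lt_alpha alpha_lt_half fc _ _ light.
set T := Tball x S u alpha in light *; set C := u |: T.
rewrite in_setD in_setU1 negb_or => /andP[/andP[zu zT] zS].
have alpha_gt0 : 0 < alpha by apply: lt_trans gamma_lt_alpha.
have alpha_lt_xuz : alpha < x u z by move: zT; rewrite inE zS zu /= -real_ltNge ?num_real.
have xuw_le w : w \in C -> x u w <= alpha.
  by rewrite in_setU1 => /predU1P[->|]; [rewrite fc_refl // ltW | rewrite inE => /and3P[]].
have zC : z \notin C by rewrite in_setU1 negb_or zu.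
rewrite sum_Nplus_Nminus_lp_cost //.
set P := Nplus plus z :&: C; set cost := \sum_(w in C) _.
have cost_ge0 : 0 <= cost by apply: sumr_ge0 => w _; apply: lp_cost_ge0.
suff [k k_le] : exists2 k, k <= Num.max ((1 - 2 * alpha)^-1) (2 / alpha) & #|P|%:R <= k * cost.
  by move/le_trans; apply; apply: ler_wpM2r.
have [far|near] := lerP (1 - alpha) (x u z).
- exists (1 - 2 * alpha)^-1; first by rewrite le_max lexx.
  rewrite ler_pdivlMl; last lra.
  apply: card_mul_le_sum; first exact: subsetIr.
    move=> w /setIP[]; rewrite inE /lp_cost => /andP[_ ->] wC.
    exact: fc_far_ge far (xuw_le w wC).
  by move=> w _; apply: lp_cost_ge0.
- exists (2 / alpha); first by rewrite le_max lexx orbT.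
  have P_le : #|P|%:R <= (#|T|.+1)%:R :> R.
    rewrite ler_nat (leq_trans (subset_leq_card (subsetIr _ _))) //.
    by rewrite cardsU1 inE eqxx andbF.
  have cluster_le : alpha * (#|T|.+1)%:R <= 2 * cost.
    exact: (light_cluster_cost fc plus S u z alpha (ltW alpha_gt0) (ltW alpha_lt_xuz) (ltW near) light).
  rewrite mulrAC ler_pdivlMr // mulrC.
  by apply: le_trans cluster_le; apply: ler_wpM2l P_le; apply: ltW.
Qed.
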